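(* Let $n\neq 1$ be a real number, $k_n=n-1$, and $k_0\in\mathbb{R}$. On the phase space with canonical coordinates $(r,\phi,p_r,p_\phi)$, $r>0$, consider $$H_{na}=\tfrac12 r^{2n}\Big(p_r^2+\tfrac{p_\phi^2}{r^2}\Big)+\frac{k_0}{r^{2k_n}}.$$ Let $$P_1=r^n\Big(p_r\cos(k_n\phi)+\tfrac1r p_\phi\sin(k_n\phi)\Big),\qquad P_2=r^n\Big(p_r\sin(k_n\phi)-\tfrac1r p_\phi\cos(k_n\phi)\Big),$$ and define $$J_1=p_\phi,\quad J_{11}=P_1^2+\frac{2k_0}{r^{2k_n}}\cos^2(k_n\phi),\quad J_{22}=P_2^2+\frac{2k_0}{r^{2k_n}}\sin^2(k_n\phi),\quad J_{12}=P_1P_2+\frac{2k_0}{r^{2k_n}}\cos(k_n\phi)\sin(k_n\phi).$$ Then $J_1,J_{11},J_{22},J_{12}$ are constants of motion of $H_{na}$ (they Poisson commute with $H_{na}$), and moreover $dJ_1\wedge dJ_{11}\wedge dJ_{22}\neq 0$, $\{J_{11},J_{22}\}=0$, and $H_{na}=\tfrac12(J_{11}+J_{22})$. In particular $H_{na}$ is superintegrable.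
   Context: The Poisson bracket is the canonical one: $\{F,G\}=\partial_rF\,\partial_{p_r}G-\partial_{p_r}F\,\partial_rG+\partial_\phi F\,\partial_{p_\phi}G-\partial_{p_\phi}F\,\partial_\phi G$. A constant of motion of $H$ is a function $F$ with $\{F,H\}=0$. A two-degree-of-freedom Hamiltonian is superintegrable if it admits two Poisson-commuting integrals and a third functionally independent integral. *)

From Stdlib Require Import Reals Lra.
From Coquelicot Require Import Coquelicot.
Open Scope R_scope.

Definition PhaseFun := R -> R -> R -> R -> R.

Definition d_r (F : PhaseFun) : PhaseFun :=
  fun r phi pr pphi => Derive (fun x => F x phi pr pphi) r.
Definition d_phi (F : PhaseFun) : PhaseFun :=
  fun r phi pr pphi => Derive (fun x => F r x pr pphi) phi.
Definition d_pr (F : PhaseFun) : PhaseFun :=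
  fun r phi pr pphi => Derive (fun x => F r phi x pphi) pr.
Definition d_pphi (F : PhaseFun) : PhaseFun :=
  fun r phi pr pphi => Derive (fun x => F r phi pr x) pphi.

Definition poisson (F G : PhaseFun) : PhaseFun :=
  fun r phi pr pphi =>
    d_r F r phi pr pphi * d_pr G r phi pr pphi
    - d_pr F r phi pr pphi * d_r G r phi pr pphi
    + d_phi F r phi pr pphi * d_pphi G r phi pr pphi
    - d_pphi F r phi pr pphi * d_phi G r phi pr pphi.

(* The phase space is r > 0. *)
Definition Poisson_commute (F G : PhaseFun) : Prop :=
  forall r phi pr pphi, 0 < r -> poisson F G r phi pr pphi = 0.

Definition constant_of_motion (F H : PhaseFun) : Prop := Poisson_commute F H.

Definition grad (F : PhaseFun) (r phi pr pphi : R) (i : nat) : R :=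
  match i with
  | 0%nat => d_r F r phi pr pphi
  | 1%nat => d_phi F r phi pr pphi
  | 2%nat => d_pr F r phi pr pphi
  | _ => d_pphi F r phi pr pphi
  end.

Definition det3 (a11 a12 a13 a21 a22 a23 a31 a32 a33 : R) : R :=
  a11 * (a22 * a33 - a23 * a32)
  - a12 * (a21 * a33 - a23 * a31)
  + a13 * (a21 * a32 - a22 * a31).

Definition wedge3_comp (F G K : PhaseFun) (r phi pr pphi : R) (i j l : nat) : R :=
  let f := grad F r phi pr pphi in
  let g := grad G r phi pr pphi in
  let k := grad K r phi pr pphi in
  det3 (f i) (f j) (f l) (g i) (g j) (g l) (k i) (k j) (k l).

Definition wedge3_nonzero_at (F G K : PhaseFun) (r phi pr pphi : R) : Prop :=
  exists i j l : nat, (i < j)%nat /\ (j < l)%nat /\ (l < 4)%nat /\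
    wedge3_comp F G K r phi pr pphi i j l <> 0.

Definition wedge3_nonzero (F G K : PhaseFun) : Prop :=
  exists r phi pr pphi, 0 < r /\ wedge3_nonzero_at F G K r phi pr pphi.

Definition superintegrable (H : PhaseFun) : Prop :=
  exists F1 F2 F3 : PhaseFun,
    constant_of_motion F1 H /\ constant_of_motion F2 H /\
    constant_of_motion F3 H /\ Poisson_commute F1 F2 /\
    wedge3_nonzero F1 F2 F3.

(* The system of the paper. Real powers r^a are Rpower r a (r > 0). *)
Definition H_na (n k0 : R) : PhaseFun :=
  fun r phi pr pphi =>
    / 2 * Rpower r (2 * n) * (pr ^ 2 + pphi ^ 2 / r ^ 2)
    + k0 / Rpower r (2 * (n - 1)).

Definition P1 (n : R) : PhaseFun :=
  fun r phi pr pphi =>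
    Rpower r n * (pr * cos ((n - 1) * phi) + / r * pphi * sin ((n - 1) * phi)).

Definition P2 (n : R) : PhaseFun :=
  fun r phi pr pphi =>
    Rpower r n * (pr * sin ((n - 1) * phi) - / r * pphi * cos ((n - 1) * phi)).

Definition J1 : PhaseFun := fun r phi pr pphi => pphi.

Definition J11 (n k0 : R) : PhaseFun :=
  fun r phi pr pphi =>
    (P1 n r phi pr pphi) ^ 2
    + 2 * k0 / Rpower r (2 * (n - 1)) * (cos ((n - 1) * phi)) ^ 2.

Definition J22 (n k0 : R) : PhaseFun :=
  fun r phi pr pphi =>
    (P2 n r phi pr pphi) ^ 2
    + 2 * k0 / Rpower r (2 * (n - 1)) * (sin ((n - 1) * phi)) ^ 2.

Definition J12 (n k0 : R) : PhaseFun :=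
  fun r phi pr pphi =>
    P1 n r phi pr pphi * P2 n r phi pr pphi
    + 2 * k0 / Rpower r (2 * (n - 1)) * cos ((n - 1) * phi) * sin ((n - 1) * phi).

(** After the partial derivatives are computed
    symbolically, writing [E = r^n], [c = cos((n-1) phi)], [s = sin((n-1) phi)],
    one has [r^(2n) = E^2] and [r^(-2(n-1)) = r^2 / E^2], so each identity
    becomes a rational identity in [r, E, c, s, p_r, p_phi] that holds modulo
    [c^2 + s^2 = 1].  Functional independence is witnessed at the point
    [(1, 0, 1, 1)], where the [(r, p_r, p_phi)] component of
    [dJ1 ^ dJ11 ^ dJ22] equals [-4 (n - 1)]. *)

From Pilot Require Import Defs.
From Stdlib Require Import Reals Lra Lia Nsatz.
From Coquelicot Require Import Coquelicot.
Open Scope R_scope.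

Lemma exp_double_scaled_ln (n r : R) :
  exp (2 * n * ln r) = exp (n * ln r) * exp (n * ln r).
Proof. rewrite <- exp_plus; f_equal; ring. Qed.

Lemma exp_double_pred_scaled_ln (n r : R) : 0 < r ->
  exp (2 * (n - 1) * ln r) = exp (n * ln r) * exp (n * ln r) / (r * r).
Proof.
  intros hr.
  replace (2 * (n - 1) * ln r) with (n * ln r + n * ln r - (ln r + ln r)) by ring.
  unfold Rminus; rewrite exp_plus, exp_Ropp, exp_plus, exp_plus, exp_ln by exact hr.
  field; apply Rgt_not_eq, hr.
Qed.

Lemma wedge3_comp_cycle (F G K : PhaseFun) (r phi pr pphi : R) (i j l : nat) :
  wedge3_comp F G K r phi pr pphi i j l = wedge3_comp G K F r phi pr pphi i j l.
Proof. unfold wedge3_comp, det3; ring. Qed.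

Lemma wedge3_nonzero_cycle (F G K : PhaseFun) :
  wedge3_nonzero F G K -> wedge3_nonzero G K F.
Proof.
  intros (r & phi & pr & pphi & hr & i & j & l & hij & hjl & hl & hF).
  exists r, phi, pr, pphi; split; [exact hr |].
  exists i, j, l; rewrite <- wedge3_comp_cycle; tauto.
Qed.

Lemma superintegrable_intro (H F1 F2 F3 : PhaseFun) :
  constant_of_motion F1 H -> constant_of_motion F2 H -> constant_of_motion F3 H ->
  Poisson_commute F1 F2 -> wedge3_nonzero F3 F1 F2 -> superintegrable H.
Proof.
  intros h1 h2 h3 h12 hw; exists F1, F2, F3.
  repeat split; try assumption.
  apply wedge3_nonzero_cycle; exact hw.
Qed.

Ltac derive_side_conditions :=
  repeat split; try assumption;
  try (apply Rgt_not_eq, exp_pos); try (apply Rgt_not_eq; nra); try lra.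

(* The side conditions of [auto_derive] are [0 < r] (for [ln r]) and
   nonvanishing denominators. *)
Ltac compute_Derive :=
  match goal with
  | |- context [Derive ?f ?x] =>
      let l := fresh "l" in
      evar (l : R);
      let hl := fresh in
      assert (hl : is_derive f x l)
        by (subst l; auto_derive; [derive_side_conditions | reflexivity]);
      rewrite (is_derive_unique f x l hl); subst l; clear hl
  end.

(* [P1] alone would resolve to Coquelicot's [P1]. *)
Ltac unfold_phase_functions :=
  unfold poisson, d_r, d_phi, d_pr, d_pphi, J1, J11, J22, J12, H_na, Defs.P1, Defs.P2, Rpower.

Ltac trig_power_identity n r phi hr :=
  rewrite ?(exp_double_scaled_ln n r), ?(exp_double_pred_scaled_ln n r hr);
  assert (hE : 0 < exp (n * ln r)) by apply exp_pos;
  generalize (sin2_cos2 ((n - 1) * phi)); unfold Rsqr;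
  set (E := exp (n * ln r)) in *; set (c := cos ((n - 1) * phi)) in *;
  set (s := sin ((n - 1) * phi)) in *; clearbody E c s; intros hcs;
  field_simplify;
  [ lazymatch goal with
    | |- _ / _ = 0 => unfold Rdiv; apply Rmult_eq_0_compat_r
    | _ => idtac
    end; cbn [pow] in *; nsatz
  | derive_side_conditions .. ].

Lemma J1_constant_of_motion (n k0 : R) : constant_of_motion J1 (H_na n k0).
Proof. intros r phi pr pphi hr; unfold_phase_functions; repeat compute_Derive; ring. Qed.

Lemma J11_constant_of_motion (n k0 : R) : constant_of_motion (J11 n k0) (H_na n k0).
Proof.
  intros r phi pr pphi hr; unfold_phase_functions; repeat compute_Derive.
  trig_power_identity n r phi hr.
Qed.

Lemma J22_constant_of_motion (n k0 : R) : constant_of_motion (J22 n k0) (H_na n k0).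
Proof.
  intros r phi pr pphi hr; unfold_phase_functions; repeat compute_Derive.
  trig_power_identity n r phi hr.
Qed.

Lemma J12_constant_of_motion (n k0 : R) : constant_of_motion (J12 n k0) (H_na n k0).
Proof.
  intros r phi pr pphi hr; unfold_phase_functions; repeat compute_Derive.
  trig_power_identity n r phi hr.
Qed.

Lemma J11_J22_commute (n k0 : R) : Poisson_commute (J11 n k0) (J22 n k0).
Proof.
  intros r phi pr pphi hr; unfold_phase_functions; repeat compute_Derive.
  trig_power_identity n r phi hr.
Qed.

Lemma H_na_half_sum (n k0 r phi pr pphi : R) : 0 < r ->
  H_na n k0 r phi pr pphi = / 2 * (J11 n k0 r phi pr pphi + J22 n k0 r phi pr pphi).
Proof.
  intros hr; apply Rminus_diag_uniq; unfold_phase_functions.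
  trig_power_identity n r phi hr.
Qed.

Lemma wedge3_comp_J1_J11_J22_at_origin (n k0 : R) :
  wedge3_comp J1 (J11 n k0) (J22 n k0) 1 0 1 1 0 2 3 = -4 * (n - 1).
Proof.
  unfold wedge3_comp, det3, grad; unfold_phase_functions; repeat compute_Derive.
  rewrite ln_1, !Rmult_0_r, exp_0, cos_0, sin_0; field.
Qed.

Lemma J1_J11_J22_independent (n k0 : R) : n <> 1 ->
  wedge3_nonzero J1 (J11 n k0) (J22 n k0).
Proof.
  intros hn; exists 1, 0, 1, 1; split; [lra |].
  exists 0%nat, 2%nat, 3%nat; repeat split; try lia.
  rewrite wedge3_comp_J1_J11_J22_at_origin; lra.
Qed.

Theorem mainTheorem1 (n k0 : R) (hn : n <> 1) :
  constant_of_motion J1 (H_na n k0) /\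
  constant_of_motion (J11 n k0) (H_na n k0) /\
  constant_of_motion (J22 n k0) (H_na n k0) /\
  constant_of_motion (J12 n k0) (H_na n k0) /\
  wedge3_nonzero J1 (J11 n k0) (J22 n k0) /\
  Poisson_commute (J11 n k0) (J22 n k0) /\
  (forall r phi pr pphi, 0 < r ->
     H_na n k0 r phi pr pphi = / 2 * (J11 n k0 r phi pr pphi + J22 n k0 r phi pr pphi)) /\
  superintegrable (H_na n k0).
Proof.
  repeat split.
  - apply J1_constant_of_motion.
  - apply J11_constant_of_motion.
  - apply J22_constant_of_motion.
  - apply J12_constant_of_motion.
  - apply J1_J11_J22_independent, hn.
  - apply J11_J22_commute.
  - apply H_na_half_sum.
  - apply (superintegrable_intro _ (J11 n k0) (J22 n k0) J1).
    + apply J11_constant_of_motion.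
    + apply J22_constant_of_motion.
    + apply J1_constant_of_motion.
    + apply J11_J22_commute.
    + apply J1_J11_J22_independent, hn.
Qed.
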